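(* There is an absolute constant $C>0$ such that for all integers $k\geq2$, \[ \lceil C\cdot 1073^{k/6}\rceil\nrightarrow(3)^2_k. \]
   Context: For $m\in\mathbb N$ write $[m]=\{0,\dots,m-1\}$. For $n\geq 3$, $k\geq 2$, the relation $n\to(3)_k^2$ means that every colouring of the edges of the complete graph on $[n]$ with $k$ colours contains a monochromatic triangle; $n\nrightarrow(3)_k^2$ is its negation. *)

From Stdlib Require Import Reals Lra Lia ZArith.
Open Scope R_scope.

(* An edge colouring of the complete graph on [n] = {0,...,n-1} with k colours:
   the edge {i,j} (i < j) gets colour c i j, which must be < k. *)
Definition is_colouring (n k : nat) (c : nat -> nat -> nat) : Prop :=
  forall i j : nat, (i < j < n)%nat -> (c i j < k)%nat.

Definition has_mono_triangle (n : nat) (c : nat -> nat -> nat) : Prop :=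
  exists i j l : nat, (i < j < l)%nat /\ (l < n)%nat /\
    c i j = c i l /\ c i j = c j l.

Definition arrows3 (n k : nat) : Prop :=
  forall c, is_colouring n k c -> has_mono_triangle n c.

From Stdlib Require Import Reals ZArith Lia Lra List Bool.
Import ListNotations.
Open Scope R_scope.

(* A colouring f of {1,...,N} with k colours having no
   monochromatic solution of x + y = z (a Schur colouring) gives the triangle-
   free edge colouring {i,j} |-> f (j - i) of K_(N+1); so it suffices to build
   large Schur colourings.  They are built by a blow-up: given a "template",
   i.e. a labelling of the residues 0..L-1 by labels 0..m, the integers
   x + W = L q + r are coloured by the old colouring at q when r has label 0,
   and by the new colour number (label r) otherwise.  The template conditions
   say exactly that no carry pattern of x + y = z can produce a monochromatic
   sum.  One explicit template with L = 33, W = 26, m = 3 (checked by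
   computation) multiplies the size roughly by 33 while adding 3 colours;
   iterating it k/3 times gives a Schur colouring of size about 33^(k/3), and
   since 33^2 = 1089 > 1073 this exceeds C * 1073^(k/6) for C = 1/(32*33). *)

Local Open Scope nat_scope.

Definition schur_colouring (N k : nat) (f : nat -> nat) : Prop :=
  (forall x, 1 <= x <= N -> f x < k) /\
  (forall x y, 1 <= x -> 1 <= y -> x + y <= N ->
     f x = f y -> f y = f (x + y) -> False).

(* A Schur colouring of {1,...,N} refutes N+1 -> (3)^2_k: colour {i,j} by f (j - i). *)
Lemma schur_not_arrows N k f : schur_colouring N k f -> ~ arrows3 (S N) k.
Proof.
  intros [Hcol Hfree] Harr.
  destruct (Harr (fun i j => f (j - i))) as (i & j & l & Hijl & Hl & E1 & E2).
  - intros i j Hij. apply Hcol. lia.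
  - cbv beta in E1, E2.
    apply (Hfree (j - i) (l - j)); try lia.
    replace (j - i + (l - j)) with (l - i) by lia. congruence.
Qed.

Lemma not_arrows_antimono n n' k : ~ arrows3 n k -> n' <= n -> ~ arrows3 n' k.
Proof.
  intros Hn Hle Hn'. apply Hn. intros c Hc.
  destruct (Hn' c) as (i & j & l & Hijl & Hl & Hmono).
  - intros i j Hij. apply Hc. lia.
  - exists i, j, l. repeat split; try lia; tauto.
Qed.

Lemma schur_colouring_widen N k k' f :
  schur_colouring N k f -> k <= k' -> schur_colouring N k' f.
Proof. intros [Hcol Hfree] Hk. split; [intros x Hx; specialize (Hcol x Hx); lia | exact Hfree]. Qed.

Lemma carry_cases L a b c d : c < 2 * L -> d < 2 * L -> L * a + c = L * b + d ->
  (a = b /\ c = d) \/ (a + 1 = b /\ c = d + L) \/ (a = b + 1 /\ c + L = d).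
Proof.
  intros Hc Hd E.
  destruct (Nat.lt_trichotomy a b) as [Hab | [Hab | Hab]].
  - destruct (Nat.eq_dec b (a + 1)) as [-> | Hb]; [right; left; nia |].
    assert (L * (a + 2) <= L * b) by (apply Nat.mul_le_mono_l; lia). nia.
  - subst b. left. lia.
  - destruct (Nat.eq_dec a (b + 1)) as [-> | Ha]; [right; right; nia |].
    assert (L * (b + 2) <= L * a) by (apply Nat.mul_le_mono_l; lia). nia.
Qed.

(* A template of period L, offset W and m new colours: label 0 marks the
   residues that inherit the old colouring, and for each label the three carry
   patterns of r1 + r2 = r3 (+ W) that could close a monochromatic sum are
   excluded (carry 0 is allowed for label 0, where the old colouring handles it). *)
Record template_ok (L W m : nat) (lab : nat -> nat) : Prop := {
  tmpl_offset : W < L;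
  tmpl_label_bound : forall r, r < L -> lab r <= m;
  tmpl_high_nonzero : forall r, W < r < L -> lab r <> 0;
  tmpl_no_mono : forall r1 r2 r3, r1 < L -> r2 < L -> r3 < L ->
    lab r1 = lab r2 -> lab r2 = lab r3 ->
    r1 + r2 <> r3 + W + L /\ r1 + r2 + L <> r3 + W /\
    (lab r1 <> 0 -> r1 + r2 <> r3 + W)
}.

Definition template_check (L W m : nat) (lab : nat -> nat) : bool :=
  (W <? L) &&
  forallb (fun r => (lab r <=? m) && implb (W <? r) (negb (lab r =? 0))) (seq 0 L) &&
  forallb (fun r1 => forallb (fun r2 => forallb (fun r3 =>
    implb ((lab r1 =? lab r2) && (lab r2 =? lab r3))
      (negb (r1 + r2 =? r3 + W + L) && negb (r1 + r2 + L =? r3 + W) &&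
       implb (negb (lab r1 =? 0)) (negb (r1 + r2 =? r3 + W))))
    (seq 0 L)) (seq 0 L)) (seq 0 L).

Lemma template_check_sound L W m lab :
  template_check L W m lab = true -> template_ok L W m lab.
Proof.
  unfold template_check. rewrite !andb_true_iff, !forallb_forall.
  intros [[HWL Hlab] Hmono]. apply Nat.ltb_lt in HWL.
  assert (Hseq : forall r, r < L -> In r (seq 0 L)) by (intros r Hr; apply in_seq; lia).
  split; [exact HWL | | |].
  - intros r Hr. specialize (Hlab r (Hseq r Hr)).
    apply andb_true_iff in Hlab as [Hm _]. now apply Nat.leb_le.
  - intros r Hr. specialize (Hlab r (Hseq r ltac:(lia))).
    apply andb_true_iff in Hlab as [_ Hnz].
    rewrite (proj2 (Nat.ltb_lt W r) (proj1 Hr)) in Hnz. simpl in Hnz. now apply negb_true_iff, Nat.eqb_neq in Hnz.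
  - intros r1 r2 r3 H1 H2 H3 E12 E23.
    specialize (Hmono r1 (Hseq r1 H1)). rewrite forallb_forall in Hmono.
    specialize (Hmono r2 (Hseq r2 H2)). rewrite forallb_forall in Hmono.
    specialize (Hmono r3 (Hseq r3 H3)).
    rewrite E12, E23, !Nat.eqb_refl in Hmono. simpl in Hmono.
    rewrite !andb_true_iff, !negb_true_iff, !Nat.eqb_neq in Hmono.
    destruct Hmono as [[Hc1 Hc2] Hc0]. repeat split; [exact Hc1 | exact Hc2 |].
    intros Hnz. rewrite E12, E23 in Hnz.
    apply Nat.eqb_neq in Hnz. rewrite Hnz in Hc0. simpl in Hc0.
    now apply negb_true_iff, Nat.eqb_neq in Hc0.
Qed.

Section Blowup.

Variables (L W m : nat) (lab : nat -> nat).
Hypothesis template : template_ok L W m lab.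

Definition blowup (a : nat) (A : nat -> nat) (x : nat) : nat :=
  if lab ((x + W) mod L) =? 0 then A ((x + W) / L)
  else a + lab ((x + W) mod L) - 1.

Lemma blowup_decode u a A x :
  (forall q, 1 <= q <= u -> A q < a) -> 1 <= x <= (u + 1) * L - W - 1 ->
  exists q r, x + W = L * q + r /\ r < L /\
    ((lab r <> 0 /\ 1 <= lab r <= m /\ blowup a A x = a + lab r - 1) \/
     (lab r = 0 /\ 1 <= q <= u /\ blowup a A x = A q /\ A q < a)).
Proof.
  intros HA Hx. destruct template as [HWL Hbound Hhigh _].
  exists ((x + W) / L), ((x + W) mod L).
  assert (Hdiv : x + W = L * ((x + W) / L) + (x + W) mod L) by apply Nat.div_mod_eq.
  assert (Hr : (x + W) mod L < L) by (apply Nat.mod_upper_bound; lia).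
  split; [exact Hdiv | split; [exact Hr |]].
  unfold blowup. set (q := (x + W) / L) in *. set (r := (x + W) mod L) in *.
  specialize (Hbound r Hr).
  destruct (Nat.eqb_spec (lab r) 0) as [H0 | H0]; [right | left; lia].
  assert (Hlow : r <= W) by (destruct (Nat.le_gt_cases r W) as [? | Hw];
                             [assumption | exfalso; exact (Hhigh r (conj Hw Hr) H0)]).
  assert (Hq1 : 1 <= q) by (destruct q; lia).
  assert (Hqu : q <= u).
  { destruct (Nat.le_gt_cases q u) as [? | Hq]; [assumption |].
    assert (L * (u + 1) <= L * q) by (apply Nat.mul_le_mono_l; lia). nia. }
  repeat split; try assumption. apply HA. lia.
Qed.

Lemma blowup_schur u a A :
  schur_colouring u a A -> schur_colouring ((u + 1) * L - W - 1) (a + m) (blowup a A).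
Proof.
  intros [HA Hfree]. pose proof (tmpl_offset _ _ _ _ template) as HWL.
  pose proof (tmpl_no_mono _ _ _ _ template) as Hmono.
  split.
  - intros x Hx.
    destruct (blowup_decode u a A x HA Hx) as (q & r & _ & _ & [(_ & ? & ->) | (_ & _ & -> & ?)]);
      lia.
  - intros x y Hx Hy Hxy Exy Eyz.
    destruct (blowup_decode u a A x HA ltac:(lia)) as (qx & rx & Dx & Rx & Cx).
    destruct (blowup_decode u a A y HA ltac:(lia)) as (qy & ry & Dy & Ry & Cy).
    destruct (blowup_decode u a A (x + y) HA ltac:(lia)) as (qz & rz & Dz & Rz & Cz).
    assert (Hsum : L * (qx + qy) + (rx + ry) = L * qz + (rz + W)) by lia.
    pose proof (carry_cases L (qx + qy) qz (rx + ry) (rz + W) ltac:(lia) ltac:(lia) Hsum)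
      as Hcarry.
    destruct Cx as [(Nx & Bx & Fx) | (Nx & Qx & Fx & Ax)];
    destruct Cy as [(Ny & By & Fy) | (Ny & Qy & Fy & Ay)];
    destruct Cz as [(Nz & Bz & Fz) | (Nz & Qz & Fz & Az)];
    (* mixed old/new colours cannot coincide, as old colours are < a *)
    rewrite ?Fx, ?Fy, ?Fz in *; try lia.
    + (* three new colours: the template excludes every carry *)
      destruct (Hmono rx ry rz Rx Ry Rz ltac:(lia) ltac:(lia)) as (N1 & N2 & N0).
      destruct Hcarry as [(_ & H) | [(_ & H) | (_ & H)]]; [apply (N0 Nx) | apply N1 | apply N2];
        lia.
    + (* three old colours: carry 0 is a monochromatic qx + qy = qz for A *)
      destruct (Hmono rx ry rz Rx Ry Rz ltac:(lia) ltac:(lia)) as (N1 & N2 & _).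
      destruct Hcarry as [(Hq & H) | [(_ & H) | (_ & H)]]; [| apply N1; lia | apply N2; lia].
      apply (Hfree qx qy); try lia. now rewrite Hq.
Qed.

Fixpoint iter_size (j : nat) : nat :=
  match j with 0 => 0 | S j => (iter_size j + 1) * L - W - 1 end.

Fixpoint iter_colouring (j : nat) : nat -> nat :=
  match j with 0 => fun _ => 0 | S j => blowup (m * j) (iter_colouring j) end.

Lemma iter_schur j : schur_colouring (iter_size j) (m * j) (iter_colouring j).
Proof.
  induction j as [| j IH]; [simpl; split; intros; lia |].
  cbn [iter_size iter_colouring]. replace (m * S j) with (m * j + m) by lia.
  now apply blowup_schur.
Qed.

(* Closed form of the recursion t' = L t - W for t = iter_size j + 1. *)
Lemma iter_size_closed j : (L - 1) * (iter_size j + 1) = (L - 1 - W) * L ^ j + W.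
Proof.
  pose proof (tmpl_offset _ _ _ _ template) as HWL.
  induction j as [| j IH]; [simpl; lia |].
  rewrite Nat.pow_succ_r'. cbn [iter_size].
  assert (L <= (iter_size j + 1) * L) by nia. nia.
Qed.

End Blowup.

Definition lab33 (r : nat) : nat :=
  nth r [0;0;1;3;3;3;1;2;2;1;0;0;0;1;0;0;0;1;2;2;1;3;3;3;1;0;0;1;2;3;3;2;1] 0.

Lemma template33 : template_ok 33 26 3 lab33.
Proof. apply template_check_sound. vm_compute. reflexivity. Qed.

Lemma not_arrows_template33 k : ~ arrows3 (S (iter_size 33 26 (k / 3))) k.
Proof.
  apply (schur_not_arrows _ _ (iter_colouring 33 26 3 lab33 (k / 3))).
  apply (schur_colouring_widen _ (3 * (k / 3))).
  - exact (iter_schur _ _ _ _ template33 (k / 3)).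
  - apply Nat.Div0.mul_div_le.
Qed.

Local Open Scope R_scope.

(* 1073^(k/6) <= 1089^(k/6) = 33^(k/3) <= 33^(k/3 + 1) (floor division). *)
Lemma rpower_1073_bound k : Rpower 1073 (INR k / 6) <= 33 ^ (k / 3 + 1).
Proof.
  assert (Hk0 : 0 <= INR k / 6) by (apply Rmult_le_pos; [apply pos_INR | lra]).
  assert (Hk : (k < 3 * (k / 3 + 1))%nat).
  { pose proof (Nat.div_mod k 3 ltac:(lia)). pose proof (Nat.mod_upper_bound k 3 ltac:(lia)).
    lia. }
  apply Rle_trans with (Rpower 1089 (INR k / 6)); [apply Rle_Rpower_l; [exact Hk0 | lra] |].
  replace 1089 with (Rpower 33 (INR 2)) by (rewrite Rpower_pow by lra; simpl; lra).
  rewrite Rpower_mult, <- Rpower_pow by lra.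
  apply Rle_Rpower; [lra |].
  apply lt_INR in Hk. rewrite mult_INR in Hk. simpl (INR 2). simpl (INR 3) in Hk. lra.
Qed.

(* The template sizes: 32 (iter_size j + 1) = 6 * 33^j + 26 >= 33^j. *)
Lemma iter_size33_bound j : / (32 * 33) * 33 ^ (j + 1) <= INR (S (iter_size 33 26 j)).
Proof.
  assert (Hnat : (33 ^ j <= 32 * S (iter_size 33 26 j))%nat).
  { pose proof (iter_size_closed _ _ _ _ template33 j) as Hclosed. simpl (33 - 1 - 26)%nat in Hclosed.
    lia. }
  apply le_INR in Hnat. rewrite mult_INR, pow_INR in Hnat.
  replace (INR 33) with 33 in Hnat by (simpl; lra). replace (INR 32) with 32 in Hnat by (simpl; lra).
  rewrite pow_add. simpl (33 ^ 1). lra.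
Qed.

Lemma ceil_le_nat (x : R) (n : nat) : x <= INR n -> (Z.to_nat (Zceil x) <= n)%nat.
Proof.
  intros Hx. rewrite INR_IZR_INZ in Hx. apply Zceil_le in Hx.
  rewrite (Zceil_eq (Z.of_nat n) (IZR (Z.of_nat n))) in Hx by lra. lia.
Qed.

Theorem theoremB1 :
  exists C : R, 0 < C /\
    forall k : nat, (2 <= k)%nat ->
      ~ arrows3 (Z.to_nat (Zceil (C * Rpower 1073 (INR k / 6)))) k.
Proof.
  exists (/ (32 * 33)). split; [lra |].
  intros k _.
  apply (not_arrows_antimono _ _ _ (not_arrows_template33 k)).
  apply ceil_le_nat.
  apply Rle_trans with (/ (32 * 33) * 33 ^ (k / 3 + 1)); [| apply iter_size33_bound].
  apply Rmult_le_compat_l; [lra | apply rpower_1073_bound].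
Qed.
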